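(* Consider a steady travelling-wave solution of the one-dimensional solid-propellant combustion model described in the context, with $c<0$ and $\dot m=-\rho_s c>0$. Then $x\mapsto \omega(x)$ is integrable on $(0,\infty)$ and $$\int_0^{+\infty}\omega(x)\,dx=-\frac{\dot m}{M\nu}.$$
   Context: Travelling-wave frame: solid in $x<0$, gas in $x>0$, interface at $x=0$; $c<0$ is the constant regression velocity, $\rho_s>0$ the solid density and $\dot m:=-\rho_s c$. The gas contains two species with common molar mass $M>0$: a reactant with mass fraction $Y$ and a product with mass fraction $1-Y$, linked by one irreversible reaction with global stoichiometric coefficient $\nu<0$ for the reactant. On $x>0$: $\rho>0$, $u$ are $C^1$, $Y$ is $C^2$, the species diffusion coefficient $D_g>0$ is a continuous function, and the reaction rate $\omega(x)=\omega(T(x),Y(x))\ge 0$ is continuous. The equations are: $-c\rho'+(\rho u)'=0$ and $\rho(u-c)Y'-(\rho D_g Y')'=\nu M\omega$ for $x>0$. Interface conditions: $\rho(0^+)(u(0^+)-c)=-\rho_s c$ (no mass accumulation); the pyrolysis injects pure reactant, i.e. the injection mass fraction is $Y(0^-)=1$; species balance $\dot m\,Y(0^-)=\dot m\,Y(0^+)-\rho(0^+)D_g(0^+)Y'(0^+)$. Far field: the reactant is completely consumed, $Y(x)\to0$, and the diffusive flux vanishes, $\rho D_g Y'(x)\to0$, as $x\to+\infty$. *)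

From Stdlib Require Import Reals.
From Coquelicot Require Import Coquelicot.
Open Scope R_scope.

Definition C1_pos (f : R -> R) : Prop :=
  forall x, 0 < x -> ex_derive f x /\ continuous (Derive f) x.

Definition C2_pos (f : R -> R) : Prop :=
  forall x, 0 < x ->
    ex_derive f x /\ ex_derive (Derive f) x /\
    continuous (Derive (Derive f)) x.

Definition C0_pos (f : R -> R) : Prop :=
  forall x, 0 < x -> continuous f x.

From Stdlib Require Import Reals Lra.
From Coquelicot Require Import Coquelicot.
Open Scope R_scope.

(* The mass equation says (rho u - c rho)' = 0, so the mass flux rho (u - c) is
   constant on (0, +oo), and the no-accumulation condition identifies it with
   mdot.  The species equation then reads (mdot Y - rho Dg Y')' = nu M omega:
   H = (mdot Y - rho Dg Y') / (nu M) is an antiderivative of omega, and the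
   improper integral is H(+oo) - H(0+).  The far field gives H(+oo) = 0 and
   the interface species balance gives H(0+) = mdot / (nu M).  No sign
   condition is needed beyond nu M <> 0. *)

Lemma filterlim_Rmult_fun {T} (F : (T -> Prop) -> Prop) {FF : Filter F}
  (f g : T -> R) (a b : R) :
  filterlim f F (locally a) -> filterlim g F (locally b) ->
  filterlim (fun x => f x * g x) F (locally (a * b)).
Proof.
  intros Hf Hg. apply (filterlim_comp_2 f g Rmult Hf Hg).
  exact (@filterlim_mult R_AbsRing a b).
Qed.

Lemma filterlim_Rminus_fun {T} (F : (T -> Prop) -> Prop) {FF : Filter F}
  (f g : T -> R) (a b : R) :
  filterlim f F (locally a) -> filterlim g F (locally b) ->
  filterlim (fun x => f x - g x) F (locally (a - b)).
Proof.
  intros Hf Hg.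
  assert (Hg' : filterlim (fun x => opp (g x)) F (locally (opp b))).
  { apply (filterlim_comp _ _ _ g opp F (locally b) _ Hg).
    exact (@filterlim_opp R_AbsRing R_NormedModule b). }
  apply (filterlim_comp_2 f (fun x => opp (g x)) Rplus Hf Hg').
  exact (@filterlim_plus _ R_NormedModule a (opp b)).
Qed.

Lemma is_derive_0_at_right_lim_eq (f : R -> R) (a l : R) :
  (forall x, a < x -> is_derive f x 0) ->
  filterlim f (at_right a) (locally l) ->
  forall x, a < x -> f x = l.
Proof.
  intros Hf Hl x Hx.
  assert (Hconst : forall y, a < y < x -> f y = f x).
  { intros y [Hy Hyx].
    destruct (MVT_cor2 f (fun _ => 0) y x Hyx) as [z [Hz _]].
    - intros z Hz. apply is_derive_Reals, Hf. lra.
    - lra. }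
  assert (Hxa : 0 < x - a) by lra.
  apply (filterlim_locally_unique (F := at_right a) f (f x) l); [| exact Hl].
  apply (filterlim_ext_loc (fun _ => f x)); [| apply filterlim_const].
  exists (mkposreal _ Hxa). intros y Hy Hay. symmetry. apply Hconst.
  apply Rabs_lt_between' in Hy. simpl in Hy. lra.
Qed.

Lemma is_RInt_gen_derive_at_right_p_infty (F f : R -> R) (a la lb : R) :
  (forall x, a < x -> is_derive F x (f x)) ->
  (forall x, a < x -> continuous f x) ->
  filterlim F (at_right a) (locally la) ->
  filterlim F (Rbar_locally p_infty) (locally lb) ->
  is_RInt_gen f (at_right a) (Rbar_locally p_infty) (lb - la).
Proof.
  intros HF Hf Hla Hlb.
  assert (HDF : forall x, a < x -> Derive F x = f x)
    by (intros x Hx; apply is_derive_unique, HF, Hx).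
  assert (Hseg : filter_prod (at_right a) (Rbar_locally p_infty) (fun ab =>
    forall x, Rmin (fst ab) (snd ab) <= x <= Rmax (fst ab) (snd ab) -> a < x)).
  { exists (fun x => a < x) (fun x => a < x).
    - exists (mkposreal 1 Rlt_0_1). auto.
    - exists a. auto.
    - intros x y Hx Hy z [Hz _]. simpl in Hz.
      assert (a < Rmin x y) by (apply Rmin_glb_lt; auto). lra. }
  apply (is_RInt_gen_ext (Derive F)).
  - eapply filter_imp; [| exact Hseg]. intros ab Hab x Hx. apply HDF, Hab. lra.
  - apply is_RInt_gen_Derive; try assumption;
      eapply filter_imp; try exact Hseg; intros ab Hab x Hx.
    + exists (f x). apply HF, Hab, Hx.
    + apply (continuous_ext_loc _ f); [| apply Hf, Hab, Hx].
      apply (filter_imp (fun y => a < y)).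
      * intros y Hy. symmetry. apply HDF, Hy.
      * apply (open_gt a x (Hab x Hx)).
Qed.

Lemma steady_mass_flux_eq (c : R) (rho u : R -> R) (rho0 u0 : R) :
  (forall x, 0 < x -> ex_derive rho x) ->
  (forall x, 0 < x -> ex_derive u x) ->
  (forall x, 0 < x -> - c * Derive rho x + Derive (fun y => rho y * u y) x = 0) ->
  filterlim rho (at_right 0) (locally rho0) ->
  filterlim u (at_right 0) (locally u0) ->
  forall x, 0 < x -> rho x * (u x - c) = rho0 * (u0 - c).
Proof.
  intros Hrho Hu Hmass Hrho0 Hu0 x Hx.
  replace (rho x * (u x - c)) with (rho x * u x - c * rho x) by ring.
  replace (rho0 * (u0 - c)) with (rho0 * u0 - c * rho0) by ring.
  revert x Hx. apply is_derive_0_at_right_lim_eq.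
  - intros x Hx.
    replace 0 with (Derive (fun y => rho y * u y) x - c * Derive rho x)
      by (specialize (Hmass x Hx); lra).
    apply (is_derive_minus (fun y => rho y * u y) (fun y => c * rho y)).
    + apply Derive_correct, ex_derive_mult; auto.
    + apply is_derive_scal, Derive_correct; auto.
  - apply (filterlim_Rminus_fun (at_right 0)).
    + apply (filterlim_Rmult_fun (at_right 0)); assumption.
    + apply (filterlim_Rmult_fun (at_right 0)); [apply filterlim_const | assumption].
Qed.

Theorem proposition2
  (c rho_s M nu : R)
  (rho u Y Dg omega : R -> R)
  (rho0 u0 Y0 D0 Yp0 : R)
  (* constants *)
  (Hc : c < 0) (Hrhos : 0 < rho_s) (HM : 0 < M) (Hnu : nu < 0)
  (* regularity and sign conditions on x > 0 *)
  (Hrho_pos : forall x, 0 < x -> 0 < rho x)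
  (Hrho_C1 : C1_pos rho) (Hu_C1 : C1_pos u) (HY_C2 : C2_pos Y)
  (HDg_pos : forall x, 0 < x -> 0 < Dg x) (HDg_C0 : C0_pos Dg)
  (Homega_C0 : C0_pos omega) (Homega_nonneg : forall x, 0 < x -> 0 <= omega x)
  (* mass conservation: -c rho' + (rho u)' = 0 *)
  (Hmass : forall x, 0 < x ->
     - c * Derive rho x + Derive (fun y => rho y * u y) x = 0)
  (* species equation: rho (u - c) Y' - (rho Dg Y')' = nu M omega *)
  (Hflux_der : forall x, 0 < x ->
     ex_derive (fun y => rho y * Dg y * Derive Y y) x)
  (Hspecies : forall x, 0 < x ->
     rho x * (u x - c) * Derive Y x
     - Derive (fun y => rho y * Dg y * Derive Y y) x = nu * M * omega x)
  (* interface traces at 0^+ *)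
  (Hrho0 : filterlim rho (at_right 0) (locally rho0))
  (Hu0 : filterlim u (at_right 0) (locally u0))
  (HY0 : filterlim Y (at_right 0) (locally Y0))
  (HD0 : filterlim Dg (at_right 0) (locally D0))
  (HYp0 : filterlim (Derive Y) (at_right 0) (locally Yp0))
  (* interface conditions, with mdot = - rho_s c and Y(0^-) = 1 *)
  (Hnoacc : rho0 * (u0 - c) = - rho_s * c)
  (Hbalance : (- rho_s * c) * 1 = (- rho_s * c) * Y0 - rho0 * D0 * Yp0)
  (* far field *)
  (HYinf : filterlim Y (Rbar_locally p_infty) (locally 0))
  (Hfluxinf : filterlim (fun x => rho x * Dg x * Derive Y x)
                (Rbar_locally p_infty) (locally 0)) :
  is_RInt_gen omega (at_right 0) (Rbar_locally p_infty)
    (- (- rho_s * c) / (M * nu)).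
Proof.
  set (mdot := - rho_s * c).
  set (J := fun y => rho y * Dg y * Derive Y y).
  set (H := fun y => / (nu * M) * (mdot * Y y - J y)).
  assert (Hmdot : forall x, 0 < x -> rho x * (u x - c) = mdot).
  { intros x Hx. unfold mdot. rewrite <- Hnoacc.
    apply (steady_mass_flux_eq c rho u); auto.
    - intros y Hy. apply Hrho_C1, Hy.
    - intros y Hy. apply Hu_C1, Hy. }
  assert (HH : forall x, 0 < x -> is_derive H x (omega x)).
  { intros x Hx.
    replace (omega x) with (/ (nu * M) * (mdot * Derive Y x - Derive J x))
      by (rewrite <- (Hmdot x Hx); unfold J; rewrite (Hspecies x Hx); field; lra).
    apply is_derive_scal.
    apply (is_derive_minus (fun y => mdot * Y y) J).
    - apply is_derive_scal, Derive_correct, HY_C2, Hx.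
    - apply Derive_correct, Hflux_der, Hx. }
  replace (- mdot / (M * nu))
    with (/ (nu * M) * (mdot * 0 - 0) - / (nu * M) * (mdot * Y0 - rho0 * D0 * Yp0))
    by (unfold mdot; rewrite <- Hbalance; field; lra).
  assert (HHlim : forall Fl : (R -> Prop) -> Prop, Filter Fl -> forall lY lJ,
    filterlim Y Fl (locally lY) -> filterlim J Fl (locally lJ) ->
    filterlim H Fl (locally (/ (nu * M) * (mdot * lY - lJ)))).
  { intros Fl HFl lY lJ HY HJ.
    apply (filterlim_Rmult_fun Fl); [apply filterlim_const |].
    apply (filterlim_Rminus_fun Fl); [| exact HJ].
    apply (filterlim_Rmult_fun Fl); [apply filterlim_const | exact HY]. }
  apply (is_RInt_gen_derive_at_right_p_infty H); [exact HH | exact Homega_C0 | |].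
  - apply HHlim; [apply at_right_proper_filter | exact HY0 |].
    repeat apply (filterlim_Rmult_fun (at_right 0)); assumption.
  - apply HHlim; [apply Rbar_locally_filter | exact HYinf | exact Hfluxinf].
Qed.
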